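(* Let $A$ be a finite alphabet, $X\subseteq A^{\mathbb{Z}}$ a subshift, $F\colon X\to X$ a cellular automaton on $X$, and $\mu$ a Borel probability measure on $X$ which is ergodic for $\sigma$. The following are equivalent: (1) there exists a blocking word $B$ for $(X,F)$ such that $\mu([B]_0)>0$; (2) $\mu$ is equicontinuous for $(X,F)$, i.e. the set of equicontinuity points of $(X,F)$ has $\mu$-measure $1$.
   Context: $A^{\mathbb{Z}}$ has the product topology with metric $d(x,y)=2^{-i}$, $i=\min\{|j|:x_j\ne y_j\}$, and shift $\sigma((x_i)_i)=(x_{i+1})_i$. A subshift is a closed $\sigma$-invariant subset of $A^{\mathbb{Z}}$; a cellular automaton on $X$ is a continuous $F\colon X\to X$ commuting with $\sigma$; by the Curtis–Hedlund–Lyndon theorem there is an integer $r\ge 0$ (a radius) and a local map $f$ with $F(x)_i=f(x_{i-r},\dots,x_{i+r})$. For $x\in A^{\mathbb{Z}}$ and $p\le q$, $x(p,q)=x_p\cdots x_q$; for a word $u=u_1\cdots u_{|u|}$ and $t\in\mathbb{Z}$, $[u]_t=\{x\in X: x_{t+j-1}=u_j,\ 1\le j\le |u|\}$. A word $B\in A^{2k+1}$ is a blocking word for $(X,F)$ if there exist an integer $i$ with $2i+1\ge r$ and words $v_n$ of length $2i+1$ ($n\ge 1$) such that for every $x\in X$ with $x(-k,k)=B$ one has $F^n(x)(-i,i)=v_n$ for all $n\ge1$. A point $x\in X$ is an equicontinuity point of $(X,F)$ if for every $\varepsilon>0$ there is $\eta>0$ such that $d(x,y)\le\eta$ implies $d(F^i(x),F^i(y))\le\varepsilon$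 for all $i>0$. *)

From HB Require Import structures.
From mathcomp Require Import all_boot all_order all_algebra.
From mathcomp Require Import all_classical all_reals.
From mathcomp Require Import measure.

Set Implicit Arguments.
Unset Strict Implicit.
Unset Printing Implicit Defensive.
Import Order.TTheory GRing.Theory Num.Theory.
Local Open Scope classical_set_scope.
Local Open Scope ring_scope.

Definition config (A : pointedType) := int -> A.

Section Shift.
Variable A : pointedType.
Variable R : realType.

Definition diff_at (x y : config A) (n : nat) : bool :=
  `[< exists j : int, (`|j|%N == n) && (x j != y j) >].

(* d(x,y) = 2^{-i}, i = min{|j| : x_j <> y_j}; d(x,x) = 0 *)
Definition dist (x y : config A) : R :=
  match pselect (exists n, diff_at x y n) with
  | left H => 2 ^- (ex_minn H)
  | right _ => 0
  end.

Definition d_open (U : set (config A)) : Prop :=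
  forall x, U x -> exists2 e : R, 0 < e & forall y, dist x y < e -> U y.

Definition d_closed (X : set (config A)) : Prop := d_open (~` X).

(* Borel sets of A^Z: the sigma-algebra generated by the open sets *)
Definition borel_sets : set (set (config A)) := d_open.

Definition shift (x : config A) : config A := fun i => x (i + 1)%R.

Definition subshift (X : set (config A)) : Prop :=
  d_closed X /\ shift @` X = X.

Definition cellular_automaton (X : set (config A)) (F : config A -> config A)
  : Prop :=
  [/\ (forall x, X x -> X (F x)),
      (forall x, X x -> forall eps : R, 0 < eps ->
         exists2 eta : R, 0 < eta &
           forall y, X y -> dist x y < eta -> dist (F x) (F y) < eps) &
      (forall x, X x -> F (shift x) = shift (F x))].

Definition seg (x : config A) (p : int) (len : nat) : seq A :=
  mkseq (fun j => x (p + j%:Z)%R) len.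

Definition cylinder (X : set (config A)) (u : seq A) (t : int)
  : set (config A) :=
  [set x | X x /\ seg x t (size u) = u].

Definition is_radius (X : set (config A)) (F : config A -> config A)
  (r : nat) : Prop :=
  exists f : seq A -> A, forall x, X x -> forall i : int,
    F x i = f (seg x (i - r%:Z)%R (2 * r).+1).

Definition blocking_word (X : set (config A)) (F : config A -> config A)
  (r : nat) (B : seq A) : Prop :=
  exists k : nat, size B = (2 * k).+1 /\
  exists i : nat, (r <= (2 * i).+1)%N /\
  exists v : nat -> seq A,
    (forall n, (1 <= n)%N -> size (v n) = (2 * i).+1) /\
    forall x, X x -> seg x (- k%:Z)%R (2 * k).+1 = B ->
      forall n, (1 <= n)%N -> seg (iter n F x) (- i%:Z)%R (2 * i).+1 = v n.

Definition equicontinuity_point (X : set (config A))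
  (F : config A -> config A) (x : config A) : Prop :=
  X x /\ forall eps : R, 0 < eps ->
    exists2 eta : R, 0 < eta & forall y, X y -> dist x y <= eta ->
      forall n, (0 < n)%N -> dist (iter n F x) (iter n F y) <= eps.

End Shift.

Definition borel_space (A : pointedType) (R : realType) :=
  g_sigma_algebraType (@borel_sets A R).

Section Measure.
Variables (A : pointedType) (R : realType).
Local Notation T := (borel_space A R).

(* Borel probability measure on X (seen as a measure on A^Z carried by X),
   ergodic for sigma *)
Definition ergodic_prob_on (X : set (config A))
  (mu : {measure set T -> \bar R}) : Prop :=
  [/\ mu setT = 1%E, mu X = 1%E,
      (forall E : set T, measurable E -> mu (@shift A @^-1` E) = mu E) &
      (forall E : set T, measurable E -> @shift A @^-1` E = E ->
         mu E = 0%E \/ mu E = 1%E)].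

Definition mu_equicontinuous (X : set (config A)) (F : config A -> config A)
  (mu : {measure set T -> \bar R}) : Prop :=
  let EQ : set T := [set x | equicontinuity_point R X F x] in
  measurable EQ /\ mu EQ = 1%E.

End Measure.

(* If B is blocking and mu([B]_0) > 0, ergodicity of the shift makes almost
   every point of X contain B at arbitrarily large positive and negative
   positions.  Two occurrences of B act as walls: any y close enough to x to
   share both occurrences and the window between them keeps agreeing with x
   on that window under all iterates of F, so x is an equicontinuity point.
   Conversely, if x is an equicontinuity point, its central word x(-K,K) is
   blocking as soon as the K-window controls the (2r+1)-window of all the
   F^n x.  Hence the equicontinuity points are covered by the cylinders of
   blocking words, a countable family since A is finite, and by shift
   invariance these cylinders cannot all be null. *)

From Pilot Require Import Defs.
From HB Require Import structures.
From mathcomp Require Import all_boot all_order all_algebra.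
From mathcomp Require Import all_classical all_reals.
From mathcomp Require Import measure.
From mathcomp Require Import ereal sequences.
From mathcomp Require Import zify.

Set Implicit Arguments.
Unset Strict Implicit.
Unset Printing Implicit Defensive.
Import Order.TTheory GRing.Theory Num.Theory.
Local Open Scope classical_set_scope.
Local Open Scope ring_scope.

Lemma int_shift_ind (P : int -> Prop) :
  P 0 -> (forall N, P N <-> P (N + 1)) -> forall N, P N.
Proof.
move=> P0 PS; suff PN n : P n%:Z /\ P (- n%:Z).
  by case=> n; [case: (PN n) | rewrite NegzE; case: (PN n.+1)].
elim: n => [|n [Pn Pmn]]; first by rewrite oppr0.
split; first by rewrite -addn1 PoszD; apply/(PS n).
by apply/(PS (- n.+1%:Z)); rewrite -addn1 PoszD opprD subrK.
Qed.

Section Metric.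
Variables (A : pointedType) (R : realType).
Implicit Types (x y z : config A) (m n K : nat).

Lemma exp2N_gt0 n : 0 < (2 : R) ^- n.
Proof. by rewrite invr_gt0 exprn_gt0. Qed.

Lemma exp2N_lt m n : (n < m)%N -> (2 : R) ^- m < 2 ^- n.
Proof. by move=> nm; rewrite ltf_pV2 ?posrE ?exprn_gt0 // ltr_eXn2l ?ltr1n. Qed.

Lemma exp2N_le m n : (n <= m)%N -> (2 : R) ^- m <= 2 ^- n.
Proof. by rewrite leq_eqVlt => /predU1P[-> // | /exp2N_lt/ltW]. Qed.

Lemma exists_exp2N_le (eps : R) : 0 < eps -> exists n, (2 : R) ^- n <= eps.
Proof.
move=> eps_gt0; have epsV_gt0 : 0 < eps^-1 by rewrite invr_gt0.
have := archi_boundP (ltW epsV_gt0).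
set n := Num.Def.archi_bound _ => lt_n; exists n.
have le_n : (n%:R : R) <= 2 ^+ n by rewrite -natrX ler_nat ltnW // ltn_expl.
rewrite -[eps]invrK lef_pV2 ?posrE ?invr_gt0 ?exprn_gt0 //.
exact: ltW (lt_le_trans lt_n le_n).
Qed.

Definition agree_on (lo hi : int) x y := forall j, lo <= j <= hi -> x j = y j.

Lemma agree_onW lo hi lo' hi' x y : lo <= lo' -> hi' <= hi ->
  agree_on lo hi x y -> agree_on lo' hi' x y.
Proof. by move=> lo_le hi_le xy j jb; apply: xy; lia. Qed.

Lemma agree_on_refl lo hi x : agree_on lo hi x x.
Proof. by []. Qed.

Lemma agree_on_sym lo hi x y : agree_on lo hi x y -> agree_on lo hi y x.
Proof. by move=> xy j jb; rewrite xy. Qed.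

Lemma agree_on_trans lo hi x y z :
  agree_on lo hi x y -> agree_on lo hi y z -> agree_on lo hi x z.
Proof. by move=> xy yz j jb; rewrite xy ?yz. Qed.

Lemma dist_le_exp2NP K x y :
  dist R x y <= 2 ^- K.+1 <-> agree_on (- K%:Z) K x y.
Proof.
rewrite /dist; case: pselect => [ex | nex]; last first.
  split=> [_ j _ | _]; last exact/ltW/exp2N_gt0.
  apply: contrapT => xy; apply: nex; exists `|j|%N.
  by apply/asboolP; exists j; rewrite eqxx; apply/eqP.
case: ex_minnP => m /asboolP[j /andP[/eqP jm xy]] m_min.
split=> [le_dist j' j'K | agr].
  apply: contrapT => xy'; have m_le : (m <= `|j'|)%N.
    by apply: m_min; apply/asboolP; exists j'; rewrite eqxx; apply/eqP.
  by move: le_dist; rewrite leNgt exp2N_lt //; lia.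
apply: exp2N_le; rewrite -jm ltnNge; apply/negP => jK.
by move: xy; rewrite agr ?eqxx //; lia.
Qed.

Lemma agree_on_dist_le m (eps : R) x y :
  2 ^- m <= eps -> agree_on (- m%:Z) m x y -> dist R x y <= eps.
Proof.
move=> m_eps xy; apply: le_trans m_eps; apply: le_trans (exp2N_le (leqnSn m)).
exact/dist_le_exp2NP.
Qed.

Lemma seg_eqP x y p n :
  seg x p n = seg y p n <-> agree_on p (p + n%:Z - 1) x y.
Proof.
split=> [xy j jb | agr].
  have jE : j = p + `|j - p|%N%:Z by lia.
  have := congr1 (fun s => nth point s `|j - p|%N) xy.
  by rewrite /seg /= !nth_mkseq -?jE //; lia.
by apply/eq_in_map => j; rewrite mem_iota => jn; apply: agr; lia.
Qed.

End Metric.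

Section BorelSets.
Variables (A : pointedType) (R : realType).
Local Notation T := (borel_space A R).

Lemma local_measurable K (S : set (config A)) :
  (forall x y, agree_on (- K%:Z) K x y -> S x -> S y) -> measurable (S : set T).
Proof.
move=> S_local; apply: sub_gen_smallest => x Sx.
exists (2 ^- K.+1); first exact: exp2N_gt0.
by move=> y /ltW /dist_le_exp2NP xy; apply: S_local Sx.
Qed.

Lemma closed_measurable (X : set (config A)) :
  d_closed R X -> measurable (X : set T).
Proof.
by move=> cX; rewrite -[X]setCK; apply: measurableC; exact: sub_gen_smallest.
Qed.

Lemma cylinder_measurable (X : set (config A)) B p :
  d_closed R X -> measurable (cylinder X B p : set T).
Proof.
move=> cX; apply: measurableI; first exact: closed_measurable.
apply: (@local_measurable (`|p| + size B)%N) => x y xy xB /=.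
by rewrite -[RHS]xB; apply/seg_eqP/agree_on_sym; apply: agree_onW xy; lia.
Qed.

End BorelSets.

Lemma countable_seq (T : Type) : countable [set: T] -> countable [set: seq T].
Proof. by move=> /Pcountable[T' ->]. Qed.

Section Measures.
Context d (T : measurableType d) (R : realType).
Variable mu : {measure set T -> \bar R}.

Lemma negligible_countable_bigcup (U : Type) (D : set U) (F : U -> set T) :
  countable [set: U] -> (forall i, D i -> mu.-negligible (F i)) ->
  mu.-negligible (\bigcup_(i in D) F i).
Proof.
move=> /Pcountable[U' eU]; subst U => FN; rewrite bigcup_mkcond.
pose G n := if unpickle n is Some i then (if i \in D then F i else set0)
            else set0.
apply: (@negligibleS _ _ _ _ (\bigcup_n G n)).
  by move=> x [i _ Fix]; exists (pickle i) => //; rewrite /G pickleK.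
apply: negligible_bigcup => n; rewrite /G; case: unpickle => [i|].
  by case: ifPn => [/set_mem/FN // | _]; exact: negligible_set0.
exact: negligible_set0.
Qed.

Hypothesis mu_setT : mu setT = 1%E.

Lemma measure_lt_pinfty (E : set T) : measurable E -> (mu E < +oo)%E.
Proof.
move=> mE; apply: le_lt_trans (le_measure _ _ _ (subsetT E)) _; rewrite ?inE //.
by have := ltry (1 : R); rewrite -mu_setT.
Qed.

Lemma measure_setC (E : set T) : measurable E -> mu (~` E) = (1 - mu E)%E.
Proof.
move=> mE; rewrite -setTD measureD ?measure_lt_pinfty //.
by rewrite setTI; congr (_ - _)%E.
Qed.

Lemma measure_full_setI (E1 E2 : set T) : measurable E1 -> measurable E2 ->
  mu E1 = 1%E -> mu E2 = 1%E -> mu (E1 `&` E2) = 1%E.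
Proof.
move=> mE1 mE2 E1_full E2_full.
rewrite -[E1 `&` E2]setCK measure_setC; last exact/measurableC/measurableI.
rewrite setCI null_set_setU ?measure_setC ?E1_full ?E2_full ?subee ?sube0 //.
all: exact: measurableC.
Qed.

Lemma measure_bigcap_nonincreasing (F : (set T)^nat) c :
  (forall n, measurable (F n)) -> nonincreasing_seq F ->
  (forall n, mu (F n) = c) -> mu (\bigcap_n F n) = c.
Proof.
move=> mF F_decr Fc.
have := nonincreasing_cvg_mu (measure_lt_pinfty (mF 0%N)) mF
  (bigcapT_measurable mF) F_decr.
have -> : mu \o F = cst c by apply/funext => n; exact: Fc.
by move/cvg_lim => <- //; rewrite lim_cst.
Qed.

End Measures.

Definition beyond (right : bool) (N p : int) : bool :=
  if right then N <= p else p <= N.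

Lemma beyondDr right N p c : beyond right (N + c) (p + c) = beyond right N p.
Proof. by case: right; rewrite /= lerD2r. Qed.

Definition recurrent {T : Type} (right : bool) (E : int -> set T) : set T :=
  [set x | forall N, exists2 p, beyond right N p & E p x].

Section ShiftInvariantMeasure.
Variables (A : pointedType) (R : realType).
Local Notation T := (borel_space A R).
Local Notation shift := (@Defs.shift A).
Variable mu : {measure set T -> \bar R}.
Hypothesis mu_shift : forall E : set T, measurable E -> mu (shift @^-1` E) = mu E.

Lemma measure_shift_covariant (V : int -> set T) :
  (forall N, measurable (V N)) -> (forall N, shift @^-1` V N = V (N + 1)) ->
  forall N, mu (V N) = mu (V 0).
Proof.
move=> mV V_shift; apply: (@int_shift_ind (fun N => mu (V N) = mu (V 0))) => // N.
by rewrite -V_shift mu_shift.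
Qed.

End ShiftInvariantMeasure.

Section Recurrence.
Variables (A : pointedType) (R : realType).
Local Notation T := (borel_space A R).
Local Notation shift := (@Defs.shift A).
Variables (E : int -> set T) (right : bool).
Hypothesis mE : forall p, measurable (E p).
Hypothesis E_shift : forall p, shift @^-1` E p = E (p + 1).

Let visits N : set T := \bigcup_(p in [set p | beyond right N p]) E p.

Let visits_measurable N : measurable (visits N).
Proof.
rewrite /visits bigcup_mkcond; apply: countable_bigcupT_measurable => // p.
by case: ifP.
Qed.

Let visits_shift N : shift @^-1` visits N = visits (N + 1).
Proof.
have E_shiftE p x : E p (shift x) = E (p + 1) x by rewrite -E_shift.
apply/seteqP; split => x [p Np Epx].
  by exists (p + 1); rewrite /= ?beyondDr // -E_shiftE.
by exists (p - 1); rewrite /= ?E_shiftE ?subrK // -(beyondDr _ _ _ 1) subrK.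
Qed.

Let recurrent_bigcap :
  recurrent right E = \bigcap_n visits (if right then n%:Z else - n%:Z).
Proof.
apply/seteqP; split => x x_rec; first by move=> n _; exact: x_rec.
move=> N; have [p Np Epx] := x_rec `|N|%N I; exists p => //.
by move: Np; rewrite /beyond; case: right => /=; lia.
Qed.

Lemma recurrent_measurable : measurable (recurrent right E).
Proof. by rewrite recurrent_bigcap; exact: bigcapT_measurable. Qed.

Lemma recurrent_shift : shift @^-1` recurrent right E = recurrent right E.
Proof.
have visitsE N x : visits N (shift x) = visits (N + 1) x by rewrite -visits_shift.
apply/seteqP; split => x x_rec N.
  by have : visits (N - 1) (shift x) := x_rec (N - 1); rewrite visitsE subrK.
by have : visits (N + 1) x := x_rec (N + 1); rewrite -visitsE.
Qed.

Variable mu : {measure set T -> \bar R}.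
Hypothesis mu_shift : forall E : set T, measurable E -> mu (shift @^-1` E) = mu E.
Hypothesis mu_setT : mu setT = 1%E.
Hypothesis mu_ergodic : forall E : set T, measurable E -> shift @^-1` E = E ->
  mu E = 0%E \/ mu E = 1%E.
Hypothesis E0_gt0 : (0 < mu (E 0))%E.

Lemma measure_recurrent : mu (recurrent right E) = 1%E.
Proof.
have visits_const :=
  measure_shift_covariant mu_shift visits_measurable visits_shift.
have rec_gt0 : (0 < mu (recurrent right E))%E.
  rewrite recurrent_bigcap.
  rewrite (measure_bigcap_nonincreasing mu_setT _ _ (fun n => visits_const _)) //.
    apply: lt_le_trans E0_gt0 _; apply: le_measure; rewrite ?inE //.
    by move=> x E0x; exists 0 => //; rewrite /beyond; case: right.
  move=> n m nm; apply/subsetPset => x [p Np Epx]; exists p => //.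
  by move: Np; rewrite /beyond; case: right => /=; lia.
case: (mu_ergodic recurrent_measurable recurrent_shift) => // mu0.
by rewrite mu0 ltxx in rec_gt0.
Qed.

End Recurrence.

Definition translate (A : pointedType) (p : int) (x : config A) : config A :=
  fun j => x (j + p).

Section Translations.
Variable A : pointedType.
Implicit Types x y : config A.
Local Notation shift := (@Defs.shift A).

Lemma shift_inj : injective shift.
Proof.
move=> x y xy; apply/funext => j.
by have := congr1 (fun z => z (j - 1)) xy; rewrite /Defs.shift subrK.
Qed.

Lemma translate0 x : translate 0 x = x.
Proof. by apply/funext => j; rewrite /translate addr0. Qed.

Lemma translateD1 (p : int) x : translate (p + 1) x = shift (translate p x).
Proof. by apply/funext => j; rewrite /translate /Defs.shift addrA addrAC. Qed.

Lemma seg_translate (p : int) x q n : seg (translate p x) q n = seg x (q + p) n.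
Proof. by apply: eq_mkseq => j; rewrite /translate addrAC. Qed.

End Translations.

Section CellularAutomaton.
Variables (A : pointedType) (R : realType).
Variables (X : set (config A)) (F : config A -> config A) (r : nat).
Local Notation shift := (@Defs.shift A).
Hypothesis X_shift : shift @` X = X.
Hypothesis F_X : forall x, X x -> X (F x).
Hypothesis F_shift : forall x, X x -> F (shift x) = shift (F x).
Hypothesis F_radius : is_radius X F r.

Lemma X_shiftE x : X (shift x) <-> X x.
Proof.
split=> [|Xx]; last by rewrite -X_shift; exists x.
by rewrite -{1}X_shift => -[z Xz /shift_inj <-].
Qed.

Lemma X_translate p x : X x -> X (translate p x).
Proof.
move=> Xx; elim/int_shift_ind: p => [|p]; first by rewrite translate0.
by rewrite translateD1 X_shiftE.
Qed.

Lemma cylinder_shift B p : shift @^-1` cylinder X B p = cylinder X B (p + 1).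
Proof.
have seg_shift x : seg (shift x) p (size B) = seg x (p + 1) (size B).
  by rewrite -seg_translate.
apply/seteqP; split => x [Xx xB].
  by split; [exact/X_shiftE | rewrite -seg_shift].
by split; [exact/X_shiftE | rewrite seg_shift].
Qed.

Lemma iter_X n x : X x -> X (iter n F x).
Proof. by move=> Xx; elim: n => //= n; exact: F_X. Qed.

Lemma F_translate p x : X x -> F (translate p x) = translate p (F x).
Proof.
move=> Xx; elim/int_shift_ind: p => [|p]; first by rewrite !translate0.
rewrite !translateD1 F_shift; last exact: X_translate.
by split=> [-> | /shift_inj].
Qed.

Lemma iter_translate n p x :
  X x -> iter n F (translate p x) = translate p (iter n F x).
Proof. by move=> Xx; elim: n => //= n ->; apply: F_translate; exact: iter_X. Qed.

Lemma F_agree_on x y j : X x -> X y ->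
  agree_on (j - r%:Z) (j + r%:Z) x y -> F x j = F y j.
Proof.
have [f Ff] := F_radius; move=> Xx Xy xy; rewrite !Ff //; congr f.
by apply/seg_eqP; apply: agree_onW xy; lia.
Qed.

Section BlockingWord.
Variables (B : seq A) (k i : nat) (v : nat -> seq A).
Hypothesis size_B : size B = (2 * k).+1.
Hypothesis r_le : (r <= (2 * i).+1)%N.
Hypothesis B_blocks : forall x, X x -> seg x (- k%:Z) (2 * k).+1 = B ->
  forall n, (1 <= n)%N -> seg (iter n F x) (- i%:Z) (2 * i).+1 = v n.

Lemma blocking_at p x n : X x -> seg x p (size B) = B -> (1 <= n)%N ->
  seg (iter n F x) (p + k%:Z - i%:Z) (2 * i).+1 = v n.
Proof.
move=> Xx xB n_ge1.
have xB' : seg (translate (p + k%:Z) x) (- k%:Z) (2 * k).+1 = B.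
  by rewrite seg_translate -size_B -[RHS]xB; congr seg; lia.
rewrite -(B_blocks (X_translate _ Xx) xB' n_ge1) iter_translate // seg_translate.
by congr seg; lia.
Qed.

(* On both walls the images are the fixed words v n; in between, F reads at
   most r <= 2i+1 cells away, so never outside the window. *)
Lemma blocking_walls p q x y : X x -> X y ->
  seg x p (size B) = B -> seg y p (size B) = B ->
  seg x q (size B) = B -> seg y q (size B) = B ->
  agree_on (p + k%:Z - i%:Z) (q + k%:Z + i%:Z) x y ->
  forall n, agree_on (p + k%:Z - i%:Z) (q + k%:Z + i%:Z)
                     (iter n F x) (iter n F y).
Proof.
move=> Xx Xy xp yp xq yq xy; elim=> // n IH j j_in.
have wall c : seg x c (size B) = B -> seg y c (size B) = B ->
    agree_on (c + k%:Z - i%:Z) (c + k%:Z + i%:Z) (iter n.+1 F x) (iter n.+1 F y).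
  move=> xc yc; have /seg_eqP : seg (iter n.+1 F x) (c + k%:Z - i%:Z) (2 * i).+1 =
                                seg (iter n.+1 F y) (c + k%:Z - i%:Z) (2 * i).+1.
    by rewrite !blocking_at.
  by apply: agree_onW; lia.
have [j_le | j_gt] := lerP j (p + k%:Z + i%:Z).
  by apply: (wall p) => //; lia.
have [j_ge | j_lt] := lerP (q + k%:Z - i%:Z) j.
  by apply: (wall q) => //; lia.
rewrite !iterS; apply: F_agree_on; [exact: iter_X | exact: iter_X |].
by apply: agree_onW IH; lia.
Qed.

Lemma recurrent_equicontinuity_point x : X x ->
  recurrent true (cylinder X B) x -> recurrent false (cylinder X B) x ->
  equicontinuity_point R X F x.
Proof.
move=> Xx x_right x_left; split=> // eps eps_gt0.
have [m m_eps] := exists_exp2N_le eps_gt0.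
have [q q_ge [_ xq]] := x_right m%:Z.
have [p p_le [_ xp]] := x_left (- (m + k)%:Z).
rewrite /beyond /= in q_ge p_le.
pose K := (`|p| + `|q| + 2 * k + i)%N.
exists (2 ^- K.+1); first exact: exp2N_gt0.
move=> y Xy /dist_le_exp2NP xy n _.
have yB c : p <= c <= q -> seg x c (size B) = B -> seg y c (size B) = B.
  move=> c_in xc; rewrite -[RHS]xc; apply/seg_eqP/agree_on_sym.
  by apply: agree_onW xy; rewrite ?size_B; lia.
have [pp pq] : p <= p <= q /\ p <= q <= q by lia.
have xy' : agree_on (p + k%:Z - i%:Z) (q + k%:Z + i%:Z) x y.
  by apply: agree_onW xy; lia.
apply: (agree_on_dist_le m_eps).
have walls := blocking_walls Xx Xy xp (yB p pp xp) xq (yB q pq xq) xy' n.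
by apply: agree_onW walls; lia.
Qed.

End BlockingWord.
End CellularAutomaton.

Section EquicontinuityPoints.
Variables (A : pointedType) (R : realType).
Variables (X : set (config A)) (F : config A -> config A).

Lemma equicontinuity_points_measurable : d_closed R X ->
  measurable ([set x | equicontinuity_point R X F x] : set (borel_space A R)).
Proof.
move=> cX.
pose G m K := [set x | forall y z, X y -> X z ->
  agree_on (- K%:Z) K x y -> agree_on (- K%:Z) K x z ->
  forall n, (0 < n)%N -> agree_on (- m%:Z) m (iter n F y) (iter n F z)].
have -> : [set x | equicontinuity_point R X F x] =
          X `&` \bigcap_m \bigcup_K G m K.
  apply/seteqP; split=> [x [Xx x_eq] | x [Xx x_G]].
    split=> // m _.
    have [eta eta_gt0 eta_eq] := x_eq _ (exp2N_gt0 R m.+1).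
    have [K K_eta] := exists_exp2N_le eta_gt0.
    exists K => // y z Xy Xz xy xz n n_gt0.
    have near_x w : X w -> agree_on (- K%:Z) K x w ->
        agree_on (- m%:Z) m (iter n F x) (iter n F w).
      move=> Xw xw; apply/dist_le_exp2NP/eta_eq => //.
      exact: agree_on_dist_le xw.
    exact: agree_on_trans (agree_on_sym (near_x y Xy xy)) (near_x z Xz xz).
  split=> // eps eps_gt0.
  have [m m_eps] := exists_exp2N_le eps_gt0.
  have [K _ G_x] := x_G m I.
  exists (2 ^- K.+1); first exact: exp2N_gt0.
  move=> y Xy /dist_le_exp2NP xy n n_gt0.
  apply: (agree_on_dist_le m_eps).
  exact: G_x x y Xx Xy (@agree_on_refl _ _ _ x) xy n n_gt0.
apply: measurableI; first exact: closed_measurable.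
apply: bigcapT_measurable => m; apply: bigcupT_measurable => K.
apply: (@local_measurable _ _ K) => x x' xx' G_x y z Xy Xz x'y x'z.
by apply: G_x => //; exact: agree_on_trans xx' _.
Qed.

Lemma equicontinuity_point_blocking (r : nat) x :
  equicontinuity_point R X F x ->
  exists K : nat, blocking_word X F r (seg x (- K%:Z) (2 * K).+1).
Proof.
move=> [Xx x_eq].
have [eta eta_gt0 eta_eq] := x_eq _ (exp2N_gt0 R r.+1).
have [K K_eta] := exists_exp2N_le eta_gt0.
exists K, K; split; first exact: size_mkseq.
exists r; split; first lia.
exists (fun n => seg (iter n F x) (- r%:Z) (2 * r).+1).
split=> [n _ | y Xy xy n n_ge1]; first exact: size_mkseq.
have /seg_eqP x_y := esym xy.
have : agree_on (- r%:Z) r (iter n F x) (iter n F y).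
  apply/dist_le_exp2NP/eta_eq => //; apply: (agree_on_dist_le K_eta).
  by apply: agree_onW x_y; lia.
by move/agree_on_sym => y_x; apply/seg_eqP; apply: agree_onW y_x; lia.
Qed.

End EquicontinuityPoints.

Section ErgodicEquicontinuity.
Variables (A : pointedType) (R : realType).
Variables (X : set (config A)) (F : config A -> config A) (r : nat).
Variable mu : {measure set (borel_space A R) -> \bar R}.
Hypothesis X_subshift : subshift R X.
Hypothesis mu_ergodic : ergodic_prob_on X mu.

Lemma blocking_mu_equicontinuous (B : seq A) :
  cellular_automaton R X F -> is_radius X F r ->
  blocking_word X F r B -> (0 < mu (cylinder X B 0))%E ->
  mu_equicontinuous X F mu.
Proof.
case: X_subshift mu_ergodic => cX X_shift [mu_setT mu_X mu_shift mu_erg].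
move=> [F_X _ F_shift] F_radius [k [size_B [i [r_le [v [_ B_blocks]]]]]] B_pos.
have cyl_measurable p := cylinder_measurable B p cX.
have rec_measurable right := recurrent_measurable right cyl_measurable.
have rec_full right := measure_recurrent right cyl_measurable
  (cylinder_shift X_shift B) mu_shift mu_setT mu_erg B_pos.
have mEQ := equicontinuity_points_measurable F cX.
split=> //; apply/le_anti/andP; split.
  by rewrite -mu_setT; apply: le_measure; rewrite ?inE.
have mXrec := measurableI _ _ (rec_measurable true) (rec_measurable false).
rewrite -(measure_full_setI mu_setT (closed_measurable cX) mXrec mu_X
  (measure_full_setI mu_setT _ _ (rec_full true) (rec_full false))) //.
apply: le_measure; rewrite ?inE //.
  exact: measurableI (closed_measurable cX) mXrec.
move=> x [Xx [x_right x_left]].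
exact: (recurrent_equicontinuity_point R X_shift F_X F_shift F_radius
  size_B r_le B_blocks).
Qed.

Lemma mu_equicontinuous_blocking : finite_set [set: A] ->
  mu_equicontinuous X F mu ->
  exists B : seq A, blocking_word X F r B /\ (0 < mu (cylinder X B 0))%E.
Proof.
case: X_subshift mu_ergodic => cX X_shift [_ _ mu_shift _] finA [mEQ EQ_full].
apply: contrapT => no_blocking.
have blocking_null B K :
    blocking_word X F r B -> mu (cylinder X B (- K%:Z)) = 0%E.
  move=> B_blocking; rewrite (measure_shift_covariant mu_shift
    (fun p => cylinder_measurable B p cX) (cylinder_shift X_shift B)).
  apply/eqP; rewrite eq_le measure_ge0 andbT leNgt; apply/negP => B_pos.
  by apply: no_blocking; exists B.
have : mu.-negligible [set x | equicontinuity_point R X F x].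
  pose blocking_cylinders : set (borel_space A R) :=
    \bigcup_(B in blocking_word X F r) \bigcup_(K : nat) cylinder X B (- K%:Z).
  apply: (@negligibleS _ _ _ _ blocking_cylinders).
    move=> x x_eq; have [K B_blocking] := equicontinuity_point_blocking r x_eq.
    exists (seg x (- K%:Z) (2 * K).+1) => //; exists K => //.
    by split; [case: x_eq | rewrite size_mkseq].
  apply: negligible_countable_bigcup => [|B B_blocking].
    exact/countable_seq/finite_set_countable.
  apply: negligible_bigcup => K.
  by apply/negligibleP; [exact: cylinder_measurable | exact: blocking_null].
move/(negligibleP _ mEQ) => EQ_null.
have /eqP : (1 = 0 :> \bar R)%E by rewrite -EQ_full; exact: EQ_null.
by rewrite onee_eq0.
Qed.

End ErgodicEquicontinuity.

Theorem mainTheorem3 (R : realType) (A : pointedType)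
  (finA : finite_set [set: A])
  (X : set (config A)) (F : config A -> config A) (r : nat)
  (mu : {measure set (borel_space A R) -> \bar R}) :
  subshift R X ->
  cellular_automaton R X F ->
  is_radius X F r ->
  ergodic_prob_on X mu ->
  (exists B : seq A, blocking_word X F r B /\
     (0 < mu (cylinder X B 0%R))%E) <->
  mu_equicontinuous X F mu.
Proof.
move=> X_subshift F_ca F_radius mu_ergodic; split.
  move=> [B [B_blocking B_pos]].
  exact: (blocking_mu_equicontinuous X_subshift mu_ergodic F_ca F_radius
    B_blocking B_pos).
exact: (mu_equicontinuous_blocking r X_subshift mu_ergodic finA).
Qed.
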